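(* For all $x,y\in\mathcal A$, the power series $\mathcal S(x,y;\lambda)=\sum_{n\ge0}P_x(W_n=y)\lambda^n$ and $\mathcal R(x,y;\lambda)=\sum_{n\ge0}P_x(\tau_y=n)\lambda^n$ have radii of convergence strictly greater than $1$.
   Context: Fix an integer $N\ge 3$. Let $\mathcal G_N$ be the groupoid with object set $\{1,\dots,N\}$ generated by arrows $A_{i,j}^{(k)}$, $i\neq j\in\{1,\dots,N\}$, $k\in\{-1,1\}$, with source $i$ and target $j$, subject to the relations $A_{i,j}^{(k)}A_{j,\ell}^{(k)}=A_{i,\ell}^{(k)}$ for all $i,j,\ell$, $k$, with the convention $A_{i,i}^{(k)}:=e_i$ (unit at object $i$). Let $\mathcal A$ be its arrow set. Let $\{W_n\}_{n\ge0}$ be the Markov chain on $\mathcal A$ with $P(W_{n+1}=y\mid W_n=x)=p_{i,j}^{(k)}$ if $x^{-1}y=A_{i,j}^{(k)}$ with $i\ne j$ and $0$ otherwise, where $p_{i,j}^{(k)}\in(0,1)$ and $\sum_{j\ne i}\sum_{k=\pm1}p_{i,j}^{(k)}=1$ for each $i$; $P_x$ denotes the law with $W_0=x$. For $y\in\mathcal A$, $\tau_y=\inf\{n\ge0: W_n=y\}$ is the first hitting time of $y$ (possibly $\infty$). (A power series that is identically zero is regarded as having infinite radius of convergence.) *)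

From Stdlib Require Import Reals.
From mathcomp Require Import all_boot all_order all_algebra.
From mathcomp Require Import Rstruct.
From Coquelicot Require Rbar PSeries.

Set Implicit Arguments.
Unset Strict Implicit.
Unset Printing Implicit Defensive.

Local Open Scope ring_scope.

(** Signs k in {-1, +1} are encoded by booleans: [true] = +1, [false] = -1.

   A generator letter A_{i,j}^{(k)} appearing in a word is recorded by its
   target j and its sign k; its source is the target of the previous letter
   (or the source object of the word).  Since the relations
   A_{ij}^{(k)} A_{jl}^{(k)} = A_{il}^{(k)} (with A_{ii}^{(k)} = e_i) say that
   for each fixed k the arrows of sign k form the pair groupoid on
   {1,..,N}, every arrow of G_N has a unique reduced expression
   A_{i0 i1}^{(k1)} A_{i1 i2}^{(k2)} ... A_{i(m-1) im}^{(km)}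
   with consecutive objects distinct and consecutive signs different
   (m = 0 gives the unit e_{i0}).  An arrow is represented by the pair
   (i0, [:: (i1,k1); ...; (im,km)]). *)

Definition raw_arrow (N : nat) : Type := ('I_N * seq ('I_N * bool))%type.

Definition reduced N (a : raw_arrow N) : bool :=
  path (fun u v : 'I_N => u != v) a.1 (map fst a.2) &&
  sorted (fun u v : bool => u != v) (map snd a.2).

Definition is_arrow N (a : raw_arrow N) : Prop := reduced a.

Definition source N (a : raw_arrow N) : 'I_N := a.1.
Definition target N (a : raw_arrow N) : 'I_N := last a.1 (map fst a.2).

(** right multiplication x * A_{t(x), j}^{(k)} of a reduced arrow x by a
    generator whose source is the target of x (j <> t(x)), returning the
    reduced form, using A_{i'i}^{(k)} A_{ij}^{(k)} = A_{i'j}^{(k)}. *)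
Definition mulgen N (x : raw_arrow N) (j : 'I_N) (k : bool) : raw_arrow N :=
  match rev x.2 with
  | [::] => (x.1, [:: (j, k)])
  | (i, k') :: rw =>
      if k' != k then (x.1, rcons x.2 (j, k))
      else let w' := rev rw in
           let i' := last x.1 (map fst w') in
           if i' == j then (x.1, w') else (x.1, rcons w' (j, k))
  end.

(** A step from x is a choice c = (j,k); it moves
   to x * A_{t(x),j}^{(k)} with probability p_{t(x),j}^{(k)} if j <> t(x)
   (and has probability 0 otherwise, since then A_{t(x),j}^{(k)} is not a
   generator). *)
Definition step_prob N (p : 'I_N -> 'I_N -> bool -> R)
  (x : raw_arrow N) (c : 'I_N * bool) : R :=
  if c.1 != target x then p (target x) c.1 c.2 else 0.

Definition step N (x : raw_arrow N) (c : 'I_N * bool) : raw_arrow N :=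
  mulgen x c.1 c.2.

(** probability (under P_x) of the cylinder of the trajectory driven by the
    choices cs *)
Fixpoint path_prob N (p : 'I_N -> 'I_N -> bool -> R) (x : raw_arrow N)
  (cs : seq ('I_N * bool)) : R :=
  match cs with
  | [::] => 1
  | c :: cs' => step_prob p x c * path_prob p (step x c) cs'
  end.

Fixpoint endpoint N (x : raw_arrow N) (cs : seq ('I_N * bool)) : raw_arrow N :=
  match cs with
  | [::] => x
  | c :: cs' => endpoint (step x c) cs'
  end.

Fixpoint first_hit_at_end N (x y : raw_arrow N) (cs : seq ('I_N * bool)) : bool :=
  match cs with
  | [::] => x == y
  | c :: cs' => (x != y) && first_hit_at_end (step x c) y cs'
  end.

Definition prob_W N (p : 'I_N -> 'I_N -> bool -> R) (x y : raw_arrow N)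
  (n : nat) : R :=
  \sum_(cs : n.-tuple ('I_N * bool))
     path_prob p x cs * (endpoint x cs == y)%:R.

Definition prob_tau N (p : 'I_N -> 'I_N -> bool -> R) (x y : raw_arrow N)
  (n : nat) : R :=
  \sum_(cs : n.-tuple ('I_N * bool))
     path_prob p x cs * (first_hit_at_end x y cs)%:R.

Definition S_coef N p (x y : raw_arrow N) : nat -> R := fun n => prob_W p x y n.
Definition R_coef N p (x y : raw_arrow N) : nat -> R := fun n => prob_tau p x y n.

(** Reduced words are weighted multiplicatively: a letter A_{r,t}^{(k)} gets the
    weight [phi r t k = 1 - eps * u k r t].  If one step of the walk multiplies the
    mean weight by at most [rho < 1], then
    [P_x(W_n = y) <= rho ^ n * weight x / weight y], and since
    [P_x(tau_y = n) <= P_x(W_n = y)] both series converge on the disc of radius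
    [1 / rho > 1].  A step either merges the last letter with a generator of the
    same sign or appends a letter of the other sign, so to first order in [eps]
    the contraction is a drift condition on the potentials [u k r].  For each sign
    these solve a Poisson equation for the chain on objects with rates
    [p i j k], whose right-hand sides must be balanced against its invariant
    measure; this is possible for [N >= 3] by an AM-GM inequality involving two
    objects distinct from the root. *)

From Stdlib Require Import Reals.
From mathcomp Require Import all_boot all_order all_algebra.
From mathcomp Require Import Rstruct.
From Coquelicot Require Rbar PSeries.
From mathcomp Require Import ring lra.

Set Implicit Arguments.
Unset Strict Implicit.
Unset Printing Implicit Defensive.

Import Order.TTheory GRing.Theory Num.Theory.
Local Open Scope ring_scope.

Lemma CV_radius_gt1_of_geometric (a : nat -> R) (C rho : R) :
  0 < rho < 1 -> (forall n, `|a n| <= C * rho ^+ n) ->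
  Rbar.Rbar_lt (Rbar.Finite 1%R) (PSeries.CV_radius a).
Proof.
case/andP=> rho_gt0 rho_lt1 a_le.
have inv_rho_gt1 : 1 < rho^-1 by rewrite invf_gt1.
apply: (@Rbar.Rbar_lt_le_trans _ (Rbar.Finite rho^-1)); first exact/RltP.
apply: (PSeries.CV_radius_bounded a).1; exists C => n.
have rho_n_gt0 : 0 < rho ^+ n by rewrite exprn_gt0.
apply/RleP; rewrite RpowE; change (`|a n * rho^-1 ^+ n| <= C).
by rewrite exprVn normrM normfV (gtr0_norm rho_n_gt0) ler_pdivrMr.
Qed.

Lemma finite_lower_bound (T : finType) (F : T -> R) :
  (forall z, 0 < F z) -> exists2 d, 0 < d <= 1 & forall z, d <= F z.
Proof.
move=> F_gt0; case: (pickP T) => [z0 _ | T0]; last first.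
  by exists 1 => [|z]; [rewrite ltr01 lexx | move: (T0 z)].
have [z _ F_min] := @arg_minP _ _ T z0 xpredT F erefl.
exists (Num.min (F z) 1) => [|z']; first by rewrite lt_min F_gt0 ltr01 ge_min lexx orbT.
by rewrite ge_min F_min.
Qed.

Lemma finite_upper_bound (T : finType) (F : T -> R) :
  exists2 V, 1 <= V & forall z, `|F z| <= V.
Proof.
have sum_ge0 : 0 <= \sum_z `|F z| by rewrite sumr_ge0.
exists (1 + \sum_z `|F z|) => [|z]; first by rewrite lerDl.
rewrite (bigD1 z) //=; have : 0 <= \sum_(z' | z' != z) `|F z'| by rewrite sumr_ge0.
lra.
Qed.

Lemma exists_neq2 (N : nat) (a b : 'I_N) :
  (2 < N)%N -> exists j : 'I_N, (j != a) && (j != b).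
Proof.
move=> N_gt2; have /card_gt0P [j] : (0 < #|~: [set a; b]|)%N.
  rewrite -(ltn_add2l #|[set a; b]|) addn0 cardsC card_ord cards2.
  by apply: leq_ltn_trans N_gt2; case: (a != b).
by rewrite !inE negb_or; exists j.
Qed.

Lemma sum_offdiag_exchange (T : finType) (F : T -> T -> R) :
  \sum_j \sum_(t | t != j) F t j = \sum_t \sum_(j | j != t) F t j.
Proof.
rewrite (exchange_big_dep xpredT) //=; apply: eq_bigr => t _.
by apply: eq_bigl => j; rewrite eq_sym.
Qed.

Section Generator.

Variables (N : nat) (q : 'I_N -> 'I_N -> R).
Hypothesis q_gt0 : forall i j : 'I_N, i != j -> 0 < q i j.

Definition generator (w : 'I_N -> R) (t : 'I_N) : R :=
  \sum_(j | j != t) q t j * (w j - w t).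

Definition out_rate (t : 'I_N) : R := \sum_(j | j != t) q t j.

Lemma generatorE w t :
  generator w t = \sum_(j | j != t) q t j * w j - out_rate t * w t.
Proof. by rewrite /generator /out_rate mulr_suml -sumrB; apply: eq_bigr => j _; ring. Qed.

Lemma max_principle (r : 'I_N) (w : 'I_N -> R) :
  w r = 0 -> (forall t, t != r -> generator w t = 0) -> forall t, w t <= 0.
Proof.
move=> w_r harmonic.
have [t _ w_max] := @arg_maxP _ _ 'I_N r xpredT w erefl.
suff w_t_le0 : w t <= 0 by move=> t'; apply: le_trans (w_max t' isT) w_t_le0.
rewrite leNgt; apply/negP => w_t_gt0.
have t_neq_r : t != r by apply: contraTneq w_t_gt0 => ->; rewrite w_r ltxx.
have rest_le0 : \sum_(j | (j != t) && (j != r)) q t j * (w j - w t) <= 0.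
  apply: sumr_le0 => j /andP [j_neq_t _]; apply: mulr_ge0_le0.
    by apply/ltW/q_gt0; rewrite eq_sym.
  by rewrite subr_le0; apply: w_max.
have step_r : q t r * (w r - w t) < 0.
  by rewrite pmulr_rlt0 ?q_gt0 // w_r sub0r oppr_lt0.
have := harmonic t t_neq_r; rewrite /generator (bigD1 r) 1?eq_sym //=.
lra.
Qed.

Definition poisson_mx (r : 'I_N) : 'M[R]_N :=
  \matrix_(j, t) if t == r then (j == r)%:R
                 else if j == t then - out_rate t else q t j.

Lemma mul_poisson_mx r (w : 'rV[R]_N) t :
  (w *m poisson_mx r) 0 t = if t == r then w 0 r else generator (w 0) t.
Proof.
rewrite !mxE; case: eqP => [-> | /eqP t_neq_r].
  rewrite (bigD1 r) //= mxE !eqxx mulr1 big1 ?addr0 // => j j_neq_r.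
  by rewrite mxE eqxx (negbTE j_neq_r) mulr0.
rewrite generatorE (bigD1 t) //= mxE (negbTE t_neq_r) eqxx mulrN mulrC addrC.
congr (_ - _); apply: eq_big => // j j_neq_t.
by rewrite mxE (negbTE t_neq_r) (negbTE j_neq_t) mulrC.
Qed.

Lemma poisson_mx_unit r : poisson_mx r \in unitmx.
Proof.
rewrite unitmxE unitfE; apply/det0P => -[v v_neq0 v_ker].
have v_r : v 0 r = 0 by have := mul_poisson_mx r v r; rewrite v_ker eqxx mxE.
have v_harmonic t : t != r -> generator (v 0) t = 0.
  by move=> t_neq_r; have := mul_poisson_mx r v t; rewrite v_ker mxE (negbTE t_neq_r).
have v_le0 := max_principle v_r v_harmonic.
have v_ge0 t : 0 <= v 0 t.
  rewrite -oppr_le0; apply: (@max_principle r (fun t => - v 0 t)) => [|t' t'_neq_r].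
    by rewrite v_r oppr0.
  rewrite /generator (eq_bigr (fun j => - (q t' j * (v 0 j - v 0 t')))) => [|j _].
    by rewrite sumrN -/(generator (v 0) t') v_harmonic ?oppr0.
  by ring.
by move/eqP: v_neq0; apply; apply/rowP => t; rewrite mxE; apply/le_anti; rewrite v_le0 v_ge0.
Qed.

Definition poisson_sol (r : 'I_N) (g : 'I_N -> R) : 'I_N -> R :=
  ((\row_t if t == r then 0 else g t) *m invmx (poisson_mx r)) 0.

Lemma poisson_solP r g :
  poisson_sol r g r = 0 /\ forall t, t != r -> generator (poisson_sol r g) t = g t.
Proof.
have := mul_poisson_mx r ((\row_t if t == r then 0 else g t) *m invmx (poisson_mx r)).
rewrite mulmxKV ?poisson_mx_unit // => sol_eq.
split => [|t t_neq_r]; first by have := sol_eq r; rewrite eqxx mxE eqxx.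
by have := sol_eq t; rewrite (negbTE t_neq_r) mxE (negbTE t_neq_r).
Qed.

Definition generator_mx : 'M[R]_N :=
  \matrix_(t, j) if t == j then - out_rate t else q t j.

Lemma mul_generator_mx (v : 'rV[R]_N) j :
  (v *m generator_mx) 0 j = \sum_(t | t != j) v 0 t * q t j - v 0 j * out_rate j.
Proof.
rewrite !mxE (bigD1 j) //= mxE eqxx mulrN addrC; congr (_ - _).
by apply: eq_big => // t t_neq_j; rewrite mxE (negbTE t_neq_j).
Qed.

Lemma out_rate_ge0 t : 0 <= out_rate t.
Proof. by apply: sumr_ge0 => j; rewrite eq_sym => /q_gt0/ltW. Qed.

Lemma stationary_balance : exists2 m : 'I_N -> R, forall t, 0 < m t &
  forall j, \sum_(t | t != j) m t * q t j = m j * out_rate j.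
Proof.
case: (pickP 'I_N) => [i0 _ | no_state]; last by exists (fun=> 1) => t; move: (no_state t).
have /det0P [v v_neq0 v_ker] : \det generator_mx == 0.
  rewrite -det_tr; apply/det0P; exists (const_mx 1).
    by apply/eqP => /rowP /(_ i0) /eqP; rewrite !mxE oner_eq0.
  apply/rowP => t; rewrite !mxE (bigD1 t) //= !mxE eqxx mul1r addrC.
  under eq_bigr => j j_neq_t do rewrite !mxE mul1r eq_sym (negbTE j_neq_t).
  exact: subrr.
have v_balance j : \sum_(t | t != j) v 0 t * q t j = v 0 j * out_rate j.
  by apply/eqP; rewrite -subr_eq0 -mul_generator_mx v_ker mxE.
pose m t := `|v 0 t|.
have slack_ge0 j : 0 <= \sum_(t | t != j) m t * q t j - m j * out_rate j.
  rewrite subr_ge0 -(ger0_norm (out_rate_ge0 j)) -normrM -v_balance.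
  apply: le_trans (ler_norm_sum _ _ _) _; apply: ler_sum => t t_neq_j.
  by rewrite normrM (gtr0_norm (q_gt0 t_neq_j)).
have slack_sum : \sum_j (\sum_(t | t != j) m t * q t j - m j * out_rate j) = 0.
  rewrite sumrB sum_offdiag_exchange; apply/eqP; rewrite subr_eq0; apply/eqP.
  by apply: eq_bigr => t _; rewrite /out_rate mulr_sumr.
have m_balance j : \sum_(t | t != j) m t * q t j = m j * out_rate j.
  apply/eqP; rewrite -subr_eq0; apply/eqP.
  by apply: (psumr_eq0P _ slack_sum) => // j' _; apply: slack_ge0.
exists m => // j; rewrite lt_neqAle normr_ge0 andbT eq_sym.
apply: contra v_neq0 => /eqP m_j0; apply/eqP; apply/rowP => t; rewrite mxE.
apply/normr0_eq0; case: (eqVneq t j) => [-> // | t_neq_j].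
have terms_ge0 t' : t' != j -> 0 <= m t' * q t' j.
  by move=> t'_neq_j; apply: mulr_ge0; [exact: normr_ge0 | exact/ltW/q_gt0].
have sum0 : \sum_(t' | t' != j) m t' * q t' j = 0 by rewrite m_balance m_j0 mul0r.
have /eqP := psumr_eq0P terms_ge0 sum0 t_neq_j.
by rewrite mulf_eq0 (gt_eqF (q_gt0 t_neq_j)) orbF => /eqP.
Qed.

Lemma invariant_measure : exists2 m : 'I_N -> R, forall t, 0 < m t &
  forall w, \sum_t m t * generator w t = 0.
Proof.
have [m m_gt0 m_balance] := stationary_balance.
exists m => // w; under eq_bigr do rewrite generatorE mulrBr mulr_sumr.
rewrite sumrB -(sum_offdiag_exchange (fun t j => m t * (q t j * w j))).
apply/eqP; rewrite subr_eq0; apply/eqP; apply: eq_bigr => j _.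
by rewrite mulrA -m_balance mulr_suml; apply: eq_bigr => t _; rewrite mulrA.
Qed.

End Generator.

Lemma sum_offdiag_ge_two (N : nat) (F : 'I_N -> R) (r a b : 'I_N) :
  (forall t, 0 <= F t) -> a != r -> b != r -> a != b ->
  F a + F b <= \sum_(t | t != r) F t.
Proof.
move=> F_ge0 a_neq_r b_neq_r a_neq_b.
rewrite (bigD1 a) //= (bigD1 b) /=; last by rewrite b_neq_r eq_sym a_neq_b.
by rewrite addrA lerDl sumr_ge0.
Qed.

Lemma sum_offdiag_gt0 (N : nat) (F : 'I_N -> R) (r : 'I_N) :
  (2 < N)%N -> (forall t, 0 < F t) -> 0 < \sum_(t | t != r) F t.
Proof.
move=> N_gt2 F_gt0; have [a /andP [a_neq_r _]] := exists_neq2 r r N_gt2.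
rewrite (bigD1 a) //=; apply: ltr_pwDl => //.
by apply: sumr_ge0 => t _; apply: ltW.
Qed.

Lemma sum_offdiag_ratio_gt1 (N : nat) (c : 'I_N -> R) (r : 'I_N) :
  (2 < N)%N -> (forall t, 0 < c t) ->
  1 < \sum_(t | t != r) (\sum_(u | u != t) c u) / (2 * c t).
Proof.
move=> N_gt2 c_gt0; have c_ge0 t : 0 <= c t by apply: ltW.
have [a /andP [a_neq_r _]] := exists_neq2 r r N_gt2.
have [b /andP [b_neq_r b_neq_a]] := exists_neq2 r a N_gt2.
have term_ge0 (t : 'I_N) : 0 <= (\sum_(u | u != t) c u) / (2 * c t).
  by rewrite divr_ge0 ?sumr_ge0 ?mulr_ge0.
have a_neq_b : a != b by rewrite eq_sym.
apply: (lt_le_trans _ (sum_offdiag_ge_two term_ge0 a_neq_r b_neq_r a_neq_b)).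
have r_neq_a : r != a by rewrite eq_sym.
have Sa := sum_offdiag_ge_two c_ge0 b_neq_a r_neq_a b_neq_r.
have Sb : c a <= \sum_(u | u != b) c u by rewrite (bigD1 a) //= lerDl sumr_ge0.
apply: (@lt_le_trans _ _ ((c b + c r) / (2 * c a) + c a / (2 * c b))); last first.
  have inv_ge0 (t : 'I_N) : 0 <= (2 * c t)^-1 by rewrite invr_ge0 mulr_ge0.
  by apply: lerD; apply: ler_wpM2r; rewrite ?inv_ge0.
have am_gm : 1 <= (c b / c a + c a / c b) / 2.
  have -> : (c b / c a + c a / c b) / 2 = 1 + (c b - c a) ^+ 2 / (2 * c a * c b).
    by field; rewrite !gt_eqF.
  by rewrite lerDl divr_ge0 ?sqr_ge0 ?mulr_ge0.
have extra_gt0 : 0 < c r / (2 * c a) by rewrite divr_gt0 ?mulr_gt0.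
have -> : (c b + c r) / (2 * c a) + c a / (2 * c b)
        = (c b / c a + c a / c b) / 2 + c r / (2 * c a).
  by field; rewrite !gt_eqF.
lra.
Qed.

Lemma balanced_targets (N : nat) (m : bool -> 'I_N -> R) :
  (2 < N)%N -> (forall s t, 0 < m s t) ->
  exists2 E : bool -> 'I_N -> R, forall s r, 0 < E s r &
    forall s r, m s r * E s r < \sum_(t | t != r) m s t * E (~~ s) t.
Proof.
move=> N_gt2 m_gt0.
pose c t := m false t / m true t.
have c_gt0 (t : 'I_N) : 0 < c t by rewrite divr_gt0.
have sum_c_gt0 (r : 'I_N) : 0 < \sum_(t | t != r) c t by apply: sum_offdiag_gt0.
pose E s r := if s then (m true r)^-1 else (\sum_(t | t != r) c t) / (2 * m false r).
exists E => [[] r | [] r]; rewrite /E /=.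
- by rewrite invr_gt0.
- by apply: divr_gt0; [exact: sum_c_gt0 | rewrite mulr_gt0].
- rewrite mulfV ?gt_eqF //.
  have termE t : m true t * E false t = (\sum_(u | u != t) c u) / (2 * c t).
    by rewrite /E /c; field; rewrite !gt_eqF.
  under eq_bigr do rewrite termE.
  exact: sum_offdiag_ratio_gt1.
- have -> : m false r * ((\sum_(t | t != r) c t) / (2 * m false r))
          = (\sum_(t | t != r) c t) / 2 by field; rewrite gt_eqF.
  have := sum_c_gt0 r; lra.
Qed.

Definition rates (N : nat) (p : 'I_N -> 'I_N -> bool -> R) (s : bool) : 'I_N -> 'I_N -> R :=
  fun i j => p i j s.

Lemma drift_potentials (N : nat) (p : 'I_N -> 'I_N -> bool -> R) :
  (2 < N)%N -> (forall (i j : 'I_N) k, i != j -> 0 < p i j k) ->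
  exists u : bool -> 'I_N -> 'I_N -> R, (forall s r, u s r r = 0) /\
    forall s r t, 0 < generator (rates p (~~ s)) (u (~~ s) t) t
                      + generator (rates p s) (u s r) t.
Proof.
move=> N_gt2 p_gt0.
have rates_gt0 s (i j : 'I_N) : i != j -> 0 < rates p s i j by exact: p_gt0.
have [m1 m1_gt0 m1_inv] := invariant_measure (rates_gt0 true).
have [m2 m2_gt0 m2_inv] := invariant_measure (rates_gt0 false).
pose m s := if s then m1 else m2.
have m_gt0 s t : 0 < m s t by case: s.
have m_inv s w : \sum_t m s t * generator (rates p s) w t = 0 by case: s.
have [E E_gt0 E_balanced] := balanced_targets N_gt2 m_gt0.
pose del s r := (\sum_(t | t != r) m s t * E (~~ s) t - m s r * E s r)
                / \sum_(t | t != r) m s t.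
have del_gt0 s r : 0 < del s r.
  by rewrite divr_gt0 ?subr_gt0 ?E_balanced ?sum_offdiag_gt0.
pose u s r := poisson_sol (rates p s) r (fun t => del s r - E (~~ s) t).
have [u_root u_off] : (forall s r, u s r r = 0) /\ forall s r t, t != r ->
    generator (rates p s) (u s r) t = del s r - E (~~ s) t.
  by split => s r; have [] := poisson_solP (rates_gt0 s) r (fun t => del s r - E (~~ s) t).
(* Invariance of [m s] forces the value of the generator at the root; [del s r]
   was chosen so that this value is [E s r]. *)
have u_root_gen s r : generator (rates p s) (u s r) r = E s r.
  have mass_gt0 : 0 < \sum_(t | t != r) m s t by exact: sum_offdiag_gt0.
  have del_mass : (\sum_(t | t != r) m s t) * del s r
      = \sum_(t | t != r) m s t * E (~~ s) t - m s r * E s r.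
    by rewrite /del mulrC divfK ?gt_eqF.
  have := m_inv s (u s r); rewrite (bigD1 r) //=.
  under eq_bigr => t t_neq_r do rewrite u_off // mulrBr.
  rewrite sumrB -mulr_suml del_mass => balance.
  have : m s r * generator (rates p s) (u s r) r = m s r * E s r by lra.
  exact: (mulfI (lt0r_neq0 (m_gt0 s r))).
exists u; split => // s r t; rewrite u_root_gen.
have [-> | t_neq_r] := eqVneq t r; first by rewrite u_root_gen addr_gt0.
by rewrite u_off // addrC subrK.
Qed.

Lemma sum_tuple_cons (T : finType) (n : nat) (F : seq T -> R) :
  \sum_(cs : n.+1.-tuple T) F cs = \sum_(c : T) \sum_(cs : n.-tuple T) F (c :: cs).
Proof.
rewrite pair_bigA /= (reindex (fun cs : T * n.-tuple T => [tuple of cs.1 :: cs.2])) /=.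
  by apply: eq_bigr => -[].
exists (fun cs : n.+1.-tuple T => (thead cs, [tuple of behead cs])).
  by move=> [c cs] _; congr pair; apply: val_inj.
by move=> [[|c cs] //= size_cs] _; apply: val_inj.
Qed.

Lemma big_bool_split (F : bool -> R) (k : bool) : \sum_b F b = F k + F (~~ k).
Proof. by rewrite big_bool; case: k => //=; rewrite addrC. Qed.

Section Trajectories.

Variables (N : nat) (p : 'I_N -> 'I_N -> bool -> R).
Hypothesis p_ge0 : forall (i j : 'I_N) k, i != j -> 0 <= p i j k.

Lemma step_prob_ge0 (x : raw_arrow N) c : 0 <= step_prob p x c.
Proof. by rewrite /step_prob; case: ifP => // c_neq; rewrite p_ge0 // eq_sym. Qed.

Lemma path_prob_ge0 (x : raw_arrow N) cs : 0 <= path_prob p x cs.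
Proof. by elim: cs x => [|c cs IH] x //=; rewrite mulr_ge0 ?step_prob_ge0. Qed.

Lemma first_hit_endpoint (x y : raw_arrow N) cs :
  first_hit_at_end x y cs -> endpoint x cs = y.
Proof. by elim: cs x => [x /eqP | c cs IH x /andP [_ /IH]]. Qed.

Lemma prob_tau_ge0 x y n : 0 <= prob_tau p x y n.
Proof. by apply: sumr_ge0 => cs _; rewrite mulr_ge0 ?path_prob_ge0 ?ler0n. Qed.

Lemma prob_tau_le_prob_W x y n : prob_tau p x y n <= prob_W p x y n.
Proof.
apply: ler_sum => cs _; case hit: (first_hit_at_end x y cs).
  by rewrite (first_hit_endpoint hit) eqxx.
by rewrite mulr0 mulr_ge0 ?path_prob_ge0 ?ler0n.
Qed.

End Trajectories.

Section WordWeight.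

Variables (N : nat) (p phi : 'I_N -> 'I_N -> bool -> R) (rho : R).
Hypothesis p_ge0 : forall (i j : 'I_N) k, i != j -> 0 <= p i j k.
Hypothesis phi_gt0 : forall r t k, 0 < phi r t k.
Hypothesis phi_diag : forall r k, phi r r k = 1.
Hypothesis rho_ge0 : 0 <= rho.
Hypothesis phi_contracts : forall (r i : 'I_N) k,
  \sum_(j | j != i) p i j k * phi r j k
  + phi r i k * \sum_(j | j != i) p i j (~~ k) * phi i j (~~ k) <= rho * phi r i k.

Fixpoint weight_from (prev : 'I_N) (w : seq ('I_N * bool)) :=
  if w is (t, k) :: w' then phi prev t k * weight_from t w' else 1.

Definition weight (x : raw_arrow N) : R := weight_from x.1 x.2.

Lemma weight_from_gt0 prev w : 0 < weight_from prev w.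
Proof. by elim: w prev => [|[t k] w IH] prev //=; rewrite mulr_gt0. Qed.

Lemma weight_from_rcons prev w t k :
  weight_from prev (rcons w (t, k)) = weight_from prev w * phi (last prev (map fst w)) t k.
Proof.
elim: w prev => [|[t' k'] w IH] prev /=; first by rewrite mulr1 mul1r.
by rewrite IH mulrA.
Qed.

(* The empty word [(i0, [::])] is handled as if its last letter were the unit
   e_{i0}, of sign [true], whose weight is [phi i0 i0 true = 1]. *)
Lemma weight_step (x : raw_arrow N) : exists r k F, [/\ 0 < F,
  weight x = F * phi r (target x) k,
  forall j, weight (step x (j, k)) = F * phi r j k &
  forall j, weight (step x (j, ~~ k)) = weight x * phi (target x) j (~~ k)].
Proof.
case: x => i0 w; case/lastP: w => [|w [i k]].
  by exists i0, true, 1; split=> [||j|j]; rewrite /weight /= ?phi_diag ?mulr1 ?mul1r.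
exists (last i0 (map fst w)), k, (weight_from i0 w).
rewrite /weight /target /step /mulgen /= rev_rcons revK map_rcons last_rcons.
split=> [||j|j]; rewrite ?weight_from_rcons ?weight_from_gt0 ?eqxx //=.
  by case: eqP => [<- | _]; rewrite ?phi_diag ?mulr1 // weight_from_rcons.
by case: (k) => /=; rewrite !weight_from_rcons map_rcons last_rcons.
Qed.

Lemma mean_step_weight (x : raw_arrow N) :
  \sum_c step_prob p x c * weight (step x c) <= rho * weight x.
Proof.
have [r [k [F [F_gt0 wx step_k step_nk]]]] := weight_step x.
set i := target x in wx step_nk *.
have -> : \sum_c step_prob p x c * weight (step x c)
    = F * (\sum_(j | j != i) p i j k * phi r j k)
      + weight x * \sum_(j | j != i) p i j (~~ k) * phi i j (~~ k).
  rewrite -(pair_bigA _ (fun j b => step_prob p x (j, b) * weight (step x (j, b)))).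
  rewrite !mulr_sumr -big_split [RHS]big_mkcond /=.
  apply: eq_bigr => j _; rewrite (big_bool_split _ k) /step_prob /= -/i.
  by case: ifP => _; rewrite ?step_k ?step_nk ?mul0r ?addr0 //; congr (_ + _); ring.
rewrite wx -mulrA -mulrDr mulrCA; apply: ler_wpM2l; first exact: ltW.
exact: phi_contracts.
Qed.

Definition mean_weight (n : nat) (x : raw_arrow N) : R :=
  \sum_(cs : n.-tuple ('I_N * bool)) path_prob p x cs * weight (endpoint x cs).

Lemma mean_weight_le n x : mean_weight n x <= rho ^+ n * weight x.
Proof.
elim: n x => [|n IH] x.
  rewrite /mean_weight (eq_bigr (fun=> weight x)) => [|cs _]; last by rewrite tuple0 /= mul1r.
  by rewrite sumr_const card_tuple expn0 expr0 mul1r.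
have -> : mean_weight n.+1 x = \sum_c step_prob p x c * mean_weight n (step x c).
  rewrite /mean_weight (sum_tuple_cons n (fun cs => path_prob p x cs * weight (endpoint x cs))).
  apply: eq_bigr => c _.
  by rewrite mulr_sumr; apply: eq_bigr => cs _; rewrite mulrA.
apply: le_trans (_ : \sum_c step_prob p x c * (rho ^+ n * weight (step x c)) <= _).
  by apply: ler_sum => c _; apply: ler_wpM2l; [exact: step_prob_ge0 | exact: IH].
under eq_bigr do rewrite mulrCA.
rewrite -mulr_sumr exprSr -mulrA; apply: ler_wpM2l; first exact: exprn_ge0.
exact: mean_step_weight.
Qed.

Lemma prob_W_le_weight n x y : prob_W p x y n <= rho ^+ n * weight x / weight y.
Proof.
have weight_y_gt0 : 0 < weight y by apply: weight_from_gt0.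
rewrite ler_pdivlMr //; apply: le_trans (mean_weight_le n x).
rewrite /prob_W mulr_suml; apply: ler_sum => cs _.
have [-> | _] := eqVneq (endpoint x cs) y; first by rewrite mulr1.
by rewrite mulr0 mul0r mulr_ge0 ?path_prob_ge0 //; apply/ltW/weight_from_gt0.
Qed.

End WordWeight.

Section Perturbation.

Variables (N : nat) (p : 'I_N -> 'I_N -> bool -> R).
Variables (u : bool -> 'I_N -> 'I_N -> R) (d V : R).
Hypothesis p_ge0 : forall (i j : 'I_N) k, i != j -> 0 <= p i j k.
Hypothesis p_sum1 : forall i : 'I_N, \sum_(j | j != i) \sum_k p i j k = 1.
Hypothesis u_diag : forall s r, u s r r = 0.
Hypothesis u_drift : forall s r t,
  d <= generator (rates p (~~ s)) (u (~~ s) t) t + generator (rates p s) (u s r) t.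
Hypothesis d_gt0 : 0 < d.
Hypothesis d_le1 : d <= 1.
Hypothesis V_ge1 : 1 <= V.
Hypothesis u_le : forall s r t, `|u s r t| <= V.

Let eps := d / (4 * V ^+ 2).
Let rho := 1 - eps * d / 2.
Let phi r t k := 1 - eps * u k r t.

Let eps_gt0 : 0 < eps.
Proof. by rewrite divr_gt0 // mulr_gt0 // exprn_gt0 // (lt_le_trans ltr01). Qed.

Let eps_V2 : eps * V ^+ 2 = d / 4.
Proof. by rewrite /eps; field; rewrite gt_eqF // (lt_le_trans ltr01). Qed.

Let rho_bounds : 0 < rho < 1.
Proof.
have V2_ge1 : 1 <= V ^+ 2 by rewrite expr_ge1 // (le_trans ler01).
have eps_le : eps <= d / 4 by rewrite -eps_V2 ler_peMr // (ltW eps_gt0).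
have epsd_gt0 : 0 < eps * d by rewrite mulr_gt0.
have epsd_le : eps * d <= d / 4 * 1 by apply: ler_pM => //; apply: ltW.
have := d_le1; rewrite /rho; move: (eps * d) epsd_gt0 epsd_le => e e_gt0 e_le d_le.
by apply/andP; split; lra.
Qed.

Lemma rates_partial_sum (i : 'I_N) (k : bool) :
  \sum_(j | j != i) p i j k + \sum_(j | j != i) p i j (~~ k) = 1.
Proof.
by rewrite -big_split -(p_sum1 i); apply: eq_bigr => j _; rewrite (big_bool_split _ k).
Qed.

Lemma norm_rates_sum_le (i : 'I_N) (k : bool) (w : 'I_N -> R) :
  (forall j, `|w j| <= V) -> `|\sum_(j | j != i) p i j k * w j| <= V.
Proof.
move=> w_le; apply: le_trans (ler_norm_sum _ _ _) _.
apply: le_trans (_ : \sum_(j | j != i) p i j k * V <= _).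
  apply: ler_sum => j j_neq_i; have p_ij_ge0 : 0 <= p i j k by rewrite p_ge0 // eq_sym.
  by rewrite normrM ger0_norm // ler_wpM2l.
have p_ge0' k' : 0 <= \sum_(j | j != i) p i j k'.
  by apply: sumr_ge0 => j j_neq_i; rewrite p_ge0 // eq_sym.
rewrite -mulr_suml ler_piMl ?(le_trans ler01) //.
by have := rates_partial_sum i k; have := p_ge0' (~~ k); lra.
Qed.

Let phi_gt0 r t k : 0 < phi r t k.
Proof.
have V2_ge : V <= V ^+ 2 by rewrite expr2 ler_peMl // (le_trans ler01).
have : eps * u k r t <= eps * V ^+ 2.
  apply: le_trans (ler_norm _) _; rewrite normrM gtr0_norm //.
  by apply: ler_wpM2l; [exact: ltW | exact: le_trans (u_le k r t) V2_ge].
have := d_le1; rewrite eps_V2 /phi; lra.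
Qed.

Let phi_diag r k : phi r r k = 1.
Proof. by rewrite /phi u_diag mulr0 subr0. Qed.

Let phi_contracts (r i : 'I_N) k :
  \sum_(j | j != i) p i j k * phi r j k
  + phi r i k * \sum_(j | j != i) p i j (~~ k) * phi i j (~~ k) <= rho * phi r i k.
Proof.
have sum_phi (r' : 'I_N) s : \sum_(j | j != i) p i j s * phi r' j s
    = \sum_(j | j != i) p i j s - eps * \sum_(j | j != i) p i j s * u s r' j.
  by rewrite mulr_sumr -sumrB; apply: eq_bigr => j _; rewrite /phi; ring.
have drift := u_drift k r i.
rewrite !generatorE u_diag mulr0 subr0 /out_rate /rates in drift.
rewrite !sum_phi /phi.
set aK := \sum_(j | j != i) p i j k in drift *.
set aN := \sum_(j | j != i) p i j (~~ k).
set S := \sum_(j | j != i) p i j k * u k r j in drift *.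
set E := \sum_(j | j != i) p i j (~~ k) * u (~~ k) i j in drift *.
set v := u k r i in drift *.
have aN_eq : aN = 1 - aK by have := rates_partial_sum i k; rewrite -/aK -/aN; lra.
have E_le : `|E| <= V by apply: norm_rates_sum_le.
have v_le : `|v| <= V by apply: u_le.
have Ev_le : E * v <= V ^+ 2.
  apply: le_trans (ler_norm _) _; rewrite normrM expr2.
  by apply: ler_pM; rewrite ?normr_ge0.
have dv_le : - (d * v) <= V ^+ 2.
  apply: le_trans (ler_norm _) _; rewrite normrN normrM gtr0_norm //.
  rewrite expr2; apply: ler_pM => //; [exact: ltW | exact: le_trans d_le1 V_ge1].
have second_order : eps * (E * v - d * v / 2) <= d / 2.
  have : eps * (E * v - d * v / 2) <= eps * (V ^+ 2 + V ^+ 2 / 2).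
    by apply: ler_wpM2l; [exact: ltW | lra].
  have -> : eps * (V ^+ 2 + V ^+ 2 / 2) = 3 / 2 * (eps * V ^+ 2) by field.
  have := d_gt0; rewrite eps_V2; lra.
rewrite -subr_ge0 aN_eq.
have -> : rho * (1 - eps * v) - (aK - eps * S + (1 - eps * v) * (1 - aK - eps * E))
    = eps * ((E + (S - aK * v) - d) + (d / 2 - eps * (E * v - d * v / 2))).
  by rewrite /rho; field.
by apply: mulr_ge0; [exact: ltW | lra].
Qed.

Lemma prob_W_geometric (x y : raw_arrow N) :
  exists C rho, 0 < rho < 1 /\ forall n, prob_W p x y n <= C * rho ^+ n.
Proof.
exists (weight phi x / weight phi y), rho; split => // n.
have rho_ge0 : 0 <= rho by case/andP: rho_bounds => /ltW.
rewrite mulrC mulrA.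
exact: (prob_W_le_weight p_ge0 phi_gt0 phi_diag rho_ge0 phi_contracts).
Qed.

End Perturbation.

Theorem proposition5p7 (N : nat) (p : 'I_N -> 'I_N -> bool -> R) :
  (3 <= N)%N ->
  (forall (i j : 'I_N) (k : bool), i != j -> 0 < p i j k < 1) ->
  (forall i : 'I_N, \sum_(j : 'I_N | j != i) \sum_(k : bool) p i j k = 1) ->
  forall x y : raw_arrow N, is_arrow x -> is_arrow y ->
    Rbar.Rbar_lt (Rbar.Finite 1%R) (PSeries.CV_radius (S_coef p x y)) /\
    Rbar.Rbar_lt (Rbar.Finite 1%R) (PSeries.CV_radius (R_coef p x y)).
Proof.
move=> N_ge3 p_bounds p_sum1 x y _ _.
have p_gt0 (i j : 'I_N) k : i != j -> 0 < p i j k by move/(p_bounds i j k)/andP => [].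
have p_ge0 (i j : 'I_N) k : i != j -> 0 <= p i j k by move/(p_gt0 i j k)/ltW.
have [u [u_diag u_drift]] := drift_potentials N_ge3 p_gt0.
have [d /andP [d_gt0 d_le1] d_le] :=
  finite_lower_bound (fun z : bool * 'I_N * 'I_N => u_drift z.1.1 z.1.2 z.2).
have [V V_ge1 u_le] := finite_upper_bound (fun z : bool * 'I_N * 'I_N => u z.1.1 z.1.2 z.2).
have [C [rho [rho_bounds W_le]]] := prob_W_geometric (u := u) p_ge0 p_sum1 u_diag
  (fun s r t => d_le (s, r, t)) d_gt0 d_le1 V_ge1 (fun s r t => u_le (s, r, t)) x y.
have tau_le n : prob_tau p x y n <= prob_W p x y n := prob_tau_le_prob_W p_ge0 x y n.
have tau_ge0 n : 0 <= prob_tau p x y n := prob_tau_ge0 p_ge0 x y n.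
split; apply: (CV_radius_gt1_of_geometric rho_bounds) => n; rewrite /S_coef /R_coef /=.
  by rewrite ger0_norm ?W_le // (le_trans (tau_ge0 n) (tau_le n)).
by rewrite ger0_norm ?tau_ge0 //; apply: le_trans (tau_le n) (W_le n).
Qed.
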